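(* Let $X$ be an infinite dimensional normed space over $\mathbb{K}=\mathbb{R}$ or $\mathbb{C}$. If $(x_n)_{n=1}^\infty$ is a linearly independent sequence in $X$ such that $\inf_{n\in\mathbb{N}}\|x_n\|_X>0$, then for any infinite dimensional subspace $\mathcal{S}$ of $\ell_\infty$ properly containing $c_0$, there is no subset of $X$ that is $[(x_n)_{n=1}^\infty,\mathcal{S}]$-lineable.
   Context: $\ell_\infty$ is the space of bounded scalar sequences and $c_0$ the space of scalar sequences converging to $0$, both viewed as subspaces of $\mathbb{K}^{\mathbb{N}}$. For a subspace $\mathcal{S}$ of $\mathbb{K}^{\mathbb{N}}$ and a sequence $(x_n)$ in $X$, a subset $A\subset X$ is $[(x_n)_{n=1}^\infty,\mathcal{S}]$-lineable if for each $(c_n)_{n=1}^\infty\in\mathcal{S}$ the series $\sum_{n=1}^\infty c_nx_n$ converges in $X$ to a vector of $A\cup\{0\}$. *)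

From HB Require Import structures.
From mathcomp Require Import all_boot all_algebra all_classical all_reals all_analysis.
Import numFieldNormedType.Exports.
Import GRing.Theory Num.Theory.
Local Open Scope ring_scope.
Local Open Scope classical_set_scope.

Definition linfty {K : numFieldType} : set (nat -> K) :=
  [set c | exists M : K, forall n, `|c n| <= M].

Definition c0 {K : numFieldType} : set (nat -> K) :=
  [set c | c @ \oo --> (0 : K)].

Definition is_subspace {K : numFieldType} (S : set (nat -> K)) : Prop :=
  [/\ S (fun _ => 0),
      (forall c d, S c -> S d -> S (fun n => c n + d n)) &
      (forall (a : K) c, S c -> S (fun n => a * c n))].

Definition lin_indep_seq {K : numFieldType} {V : lmodType K} (x : nat -> V) : Prop :=
  forall (m : nat) (a : nat -> K),
    \sum_(i < m) a i *: x i = 0 -> forall i, (i < m)%N -> a i = 0.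

Definition infinite_dim {K : numFieldType} {V : lmodType K} (B : set V) : Prop :=
  forall m : nat, exists y : nat -> V,
    [/\ (forall i, (i < m)%N -> B (y i)) &
        (forall a : nat -> K,
           \sum_(i < m) a i *: y i = 0 -> forall i, (i < m)%N -> a i = 0)].

Definition seq_lineable {K : numFieldType} {X : normedModType K}
    (x : nat -> X) (S : set (nat -> K)) (A : set X) : Prop :=
  forall c, S c -> exists v : X,
    [/\ (A `|` [set 0]) v & series (fun n => c n *: x n) @ \oo --> v].

Definition thm3_for (K : numFieldType) : Prop :=
  forall (X : normedModType K) (x : nat -> X),
    infinite_dim [set: X] ->
    lin_indep_seq x ->
    (exists2 d : K, 0 < d & forall n, d <= `|x n|) ->
    forall S : set (nat -> K),
      is_subspace S ->
      S `<=` linfty ->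
      infinite_dim S ->
      c0 `<` S ->
      ~ (exists A : set X, seq_lineable x S A).

From mathcomp Require Import all_boot all_algebra all_classical all_reals all_analysis.
From mathcomp Require Import complex order.
Import numFieldNormedType.Exports.
Import Order.TTheory GRing.Theory Num.Theory.
Set Implicit Arguments.
Unset Strict Implicit.
Local Open Scope ring_scope.
Local Open Scope classical_set_scope.

(* The terms of a convergent series tend to 0; since the norms of the x_n are
   bounded below, so do the coefficients.  Hence lineability forces S ⊆ c_0,
   which is incompatible with S properly containing c_0. *)

Section BoundedBelow.
Variables (K : numFieldType) (X : normedModType K) (x : nat -> X) (d : K).
Hypotheses (d_gt0 : 0 < d) (x_ge_d : forall n, d <= `|x n|).

Lemma cvg0_coef_of_cvg0_scale (c : nat -> K) :
  (fun n => c n *: x n) @ \oo --> (0 : X) -> c @ \oo --> (0 : K).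
Proof.
move/cvgr0Pnorm_lt => cx0; apply/cvgr0Pnorm_lt => e e_gt0.
apply: filterS (cx0 _ (mulr_gt0 e_gt0 d_gt0)) => n; rewrite normrZ => cxe.
rewrite -(ltr_pM2r d_gt0); apply: le_lt_trans cxe.
by rewrite ler_wpM2l.
Qed.

Lemma seq_lineable_sub_c0 (S : set (nat -> K)) (A : set X) :
  seq_lineable x S A -> S `<=` c0.
Proof.
move=> lin c Sc; have [v [_ series_cv]] := lin c Sc.
exact: cvg0_coef_of_cvg0_scale (cvg_series_cvg_0 (cvgP _ series_cv)).
Qed.

End BoundedBelow.

Lemma thm3_for_numField (K : numFieldType) : thm3_for K.
Proof.
move=> X x _ _ [d d_gt0 x_ge_d] S _ _ _ [_ S_not_sub_c0] [A lin].
exact: S_not_sub_c0 (seq_lineable_sub_c0 d_gt0 x_ge_d lin).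
Qed.

Local Open Scope complex_scope.

Theorem mainTheorem3 (R : realType) : [/\ thm3_for R & thm3_for R[i]].
Proof. by split; apply: thm3_for_numField. Qed.
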